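(* Let $G$ be an ordered graph, and let $e,f\in E(G)$ be edges which both contain the vertex $\mathrm{v}_G(f)$ and satisfy $\mathrm{ht}_G(f)\prec_{\mathrm{lex}}\mathrm{ht}_G(e)$. Then $e<_G f$.
   Context: An ordered graph is a finite simple graph $G$ equipped with a total order $\le_G$ on $E(G)$ and a total order $\le^V_G$ on $V(G)$. Let $\mathbb N=\{1,2,\dots\}$. Define $\preceq_{\mathrm{lex}}$ on $\mathbb N\times V(G)$ by $(i,v)\preceq_{\mathrm{lex}}(i',v')$ iff $i<i'$, or $i=i'$ and $v\le^V_G v'$. The height table $\mathrm{HT}(G)$ is a partially filled array indexed by $\mathbb N\times V(G)$, built by going through all $(i,v)$ in $\preceq_{\mathrm{lex}}$-increasing order and setting the entry at $(i,v)$ to be the $\le_G$-largest edge containing $v$ not yet entered into the table (blank if none remain). Every edge is entered exactly once; $\mathrm{ht}_G(e)=(\mathrm{h}_G(e),\mathrm{v}_G(e))$ is the position of $e$, with $\mathrm{h}_G(e)$ its row and $\mathrm{v}_G(e)$ its column. *)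

From mathcomp Require Import all_boot.
Set Implicit Arguments. Unset Strict Implicit. Unset Printing Implicit Defensive.

(* An ordered graph on a finite vertex type V:
   - E : the edge set, a set of 2-element subsets of V (finite simple graph);
   - leE : a total order on E (the order <=_G on edges);
   - leV : a total order on V (the order <=^V_G on vertices). *)

Definition total_order_on (T : finType) (A : {pred T}) (le : rel T) : Prop :=
  [/\ {in A, reflexive le},
      {in A &, antisymmetric le},
      {in A & &, transitive le} &
      {in A &, total le}].

Definition ordered_graph (V : finType) (E : {set {set V}})
    (leE : rel {set V}) (leV : rel V) : Prop :=
  [/\ {in E, forall e : {set V}, #|e| = 2},
      total_order_on (mem E) leE &
      total_order_on (mem [set: V]) leV].

Section HeightTable.
Variables (V : finType) (E : {set {set V}}) (leE : rel {set V}) (leV : rel V).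

Definition vseq : seq V := sort leV (enum V).

Definition pick_edge (R : {set {set V}}) (v : V) : option {set V} :=
  [pick e in R | (v \in e) && [forall e' in R, (v \in e') ==> leE e' e]].

Definition upd (R : {set {set V}}) (v : V) : {set {set V}} :=
  if pick_edge R v is Some e then R :\ e else R.

Definition row_upd (R : {set {set V}}) : {set {set V}} := foldl upd R vseq.

(* edges not yet entered just before position (i, v), for i >= 1 *)
Definition remaining (i : nat) (v : V) : {set {set V}} :=
  foldl upd (iter i.-1 row_upd E) (take (index v vseq) vseq).

(* the entry of HT(G) at position (i, v): None = blank; row 0 does not exist *)
Definition HT (i : nat) (v : V) : option {set V} :=
  if i == 0 then None else pick_edge (remaining i v) v.

End HeightTable.

Definition lex_lt (V : finType) (leV : rel V) (p q : nat * V) : bool :=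
  (p.1 < q.1) || ((p.1 == q.1) && leV p.2 q.2 && (p.2 != q.2)).

From Pilot Require Import Defs.
From mathcomp Require Import all_boot.
Set Implicit Arguments. Unset Strict Implicit. Unset Printing Implicit Defensive.

(* Filling the height table only ever removes edges from the set of edges
   still to be entered, so everything remaining at a later position (j, w)
   already remained just after f was entered at (i, v).  Since e is entered
   at (j, w), it was available at (i, v), contains v and differs from f; as f
   was the largest such edge, e < f. *)

Lemma total_order_on_setT (T : finType) (le : rel T) :
  total_order_on (mem [set: T]) le ->
  [/\ reflexive le, antisymmetric le, transitive le & total le].
Proof.
by case=> refl anti trans tot; split=> [x|x y|x y z|x y];
  [apply: refl | apply: anti | apply: trans | apply: tot]; rewrite inE.
Qed.

Section HeightTable.
Variables (V : finType) (E : {set {set V}}) (leE : rel {set V}) (leV : rel V).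

Local Notation upd := (upd leE).
Local Notation row_upd := (row_upd leE leV).
Local Notation vseq := (vseq leV).
Local Notation remaining := (remaining E leE leV).
Local Notation HT := (HT E leE leV).

Definition remaining_after (i : nat) (v : V) : {set {set V}} :=
  foldl upd (iter i.-1 row_upd E) (take (index v vseq).+1 vseq).

Lemma upd_subset R v : upd R v \subset R.
Proof. by rewrite /Defs.upd; case: pick_edge => // f; apply: subsetDl. Qed.

Lemma foldl_upd_subset R s : foldl upd R s \subset R.
Proof.
by elim: s R => //= v s IHs R; apply: subset_trans (IHs _) (upd_subset R v).
Qed.

Lemma foldl_upd_take_subset R s m n : m <= n ->
  foldl upd R (take n s) \subset foldl upd R (take m s).
Proof.
move=> le_mn; rewrite -(cat_take_drop m (take n s)) take_takel // foldl_cat.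
exact: foldl_upd_subset.
Qed.

Lemma iter_row_upd_subset n R : iter n row_upd R \subset R.
Proof.
elim: n => [|n IHn] //=; apply: subset_trans IHn.
exact: foldl_upd_subset.
Qed.

Lemma iter_row_upd_leq_subset R m n : m <= n ->
  iter n row_upd R \subset iter m row_upd R.
Proof. by move=> le_mn; rewrite -(subnK le_mn) iterD iter_row_upd_subset. Qed.

Lemma pick_edge_mem_max R v f : pick_edge leE R v = Some f ->
  f \in R /\ {in R, forall e : {set V}, v \in e -> leE e f}.
Proof.
rewrite /pick_edge; case: pickP => // g /and3P[gR vg /forallP g_max] [<-].
by split=> // e eR ve; have /implyP := g_max e; rewrite eR ve; apply.
Qed.

Lemma HT_entry i v f : HT i v = Some f ->
  0 < i /\ pick_edge leE (remaining i v) v = Some f.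
Proof. by rewrite /HT lt0n; case: eqP. Qed.

Lemma mem_vseq v : v \in vseq.
Proof. by rewrite mem_sort mem_enum. Qed.

Lemma index_vseq_size v : index v vseq < size vseq.
Proof. by rewrite index_mem mem_vseq. Qed.

Lemma remaining_after_entry i v f :
  pick_edge leE (remaining i v) v = Some f ->
  remaining_after i v = remaining i v :\ f.
Proof.
rewrite /remaining_after (take_nth v (index_vseq_size v)) -cats1 foldl_cat /=.
by rewrite nth_index ?mem_vseq // /Defs.upd => ->.
Qed.

Section TotalVertexOrder.
Hypotheses (leV_refl : reflexive leV) (leV_anti : antisymmetric leV)
  (leV_trans : transitive leV) (leV_total : total leV).

Lemma index_vseq_lt v w : leV v w -> v != w -> index v vseq < index w vseq.
Proof.
move=> le_vw neq_vw; rewrite ltnNge; apply: contra neq_vw => le_wv.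
have := sorted_leq_nth leV_trans leV_refl v (sort_sorted leV_total (enum V))
  _ _ (index_vseq_size w) (index_vseq_size v) le_wv.
rewrite !nth_index ?mem_vseq // => le_wv'.
by rewrite (@leV_anti v w) ?le_vw.
Qed.

Lemma remaining_lex_subset i j v w : 0 < i -> lex_lt leV (i, v) (j, w) ->
  remaining j w \subset remaining_after i v.
Proof.
move=> i_gt0 /orP[/= lt_ij | /= /andP[/andP[/eqP <- le_vw] neq_vw]].
  apply: subset_trans (foldl_upd_subset _ _) _.
  apply: subset_trans (@iter_row_upd_leq_subset E i j.-1 _) _.
    by rewrite -ltnS prednK // (leq_ltn_trans _ lt_ij).
  rewrite -(prednK i_gt0) iterS prednK // /Defs.row_upd.
  rewrite -[X in foldl _ _ X]take_size.
  exact/foldl_upd_take_subset/index_vseq_size.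
exact/foldl_upd_take_subset/index_vseq_lt.
Qed.

End TotalVertexOrder.
End HeightTable.

Theorem mainTheorem10 (V : finType) (E : {set {set V}})
    (leE : rel {set V}) (leV : rel V) (e f : {set V}) (i j : nat) (v w : V) :
  ordered_graph E leE leV ->
  e \in E -> f \in E ->
  HT E leE leV i v = Some f ->
  HT E leE leV j w = Some e ->
  v \in e -> v \in f ->
  lex_lt leV (i, v) (j, w) ->
  leE e f && (e != f).
Proof.
case=> _ _ /total_order_on_setT[leV_refl leV_anti leV_trans leV_total] _ _.
move=> /HT_entry[i_gt0 f_entry] /HT_entry[_ /pick_edge_mem_max[e_rem _]] ve _ lt_vw.
have [_ f_max] := pick_edge_mem_max f_entry.
have : e \in remaining_after E leE leV i v.
  by apply: subsetP e_rem; apply: remaining_lex_subset.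
rewrite (remaining_after_entry f_entry) in_setD1 => /andP[neq_ef e_rem_iv].
by rewrite neq_ef (f_max _ e_rem_iv ve).
Qed.
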